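(* Let $(\Gamma,c)$ be a real congruence group and let $\gamma\in\Gamma$ be admissible. Then $C_\gamma$ contains two cusps of $\Gamma$, and $C_\gamma$ is homeomorphic to a closed interval.
   Context: $\mathfrak{h}$ is the upper half-plane. A complex conjugation is an anti-holomorphic involution $c$ of $\mathfrak{h}$; it extends to $\mathfrak{h}\cup\mathbf{R}\mathbf{P}^1$. For $\gamma\in\mathrm{PSL}_2(\mathbf{R})$, $\gamma^c=c\gamma c$. A real congruence group is a pair $(\Gamma,c)$ with $\Gamma\subseteq\mathrm{PSL}_2(\mathbf{Z})$, $c$ a complex conjugation with $\Gamma^c=\Gamma$, and such that for some $N\ge1$, $\Gamma$ contains $\Gamma(N)$ (image of matrices $\equiv I\bmod N$) and $\Gamma(N)^c=\Gamma(N)$. The cusps of $\Gamma$ are the points of $\mathbf{Q}\mathbf{P}^1$, and $\mathfrak{h}^*=\mathfrak{h}\cup\mathbf{Q}\mathbf{P}^1$. An element $\gamma\in\Gamma$ is admissible if $\gamma^c=\gamma^{-1}$, and $C_\gamma=\{z\in\mathfrak{h}^*:\gamma z=cz\}$. *)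

From Stdlib Require Import Reals ZArith.
From Coquelicot Require Import Coquelicot.
Open Scope R_scope.

Record rmat := RMat { ra : R; rb : R; rc : R; rd : R }.
Record zmat := ZMat { za : Z; zb : Z; zc : Z; zd : Z }.

Definition rdet (m : rmat) : R := ra m * rd m - rb m * rc m.
Definition zdet (m : zmat) : Z := (za m * zd m - zb m * zc m)%Z.
Definition zmul (m n : zmat) : zmat :=
  ZMat (za m * za n + zb m * zc n) (za m * zb n + zb m * zd n)
       (zc m * za n + zd m * zc n) (zc m * zb n + zd m * zd n).
Definition zinv (m : zmat) : zmat := ZMat (zd m) (- zb m) (- zc m) (za m).
Definition zneg (m : zmat) : zmat := ZMat (- za m) (- zb m) (- zc m) (- zd m).
Definition zid : zmat := ZMat 1 0 0 1.
Definition rmat_of_z (m : zmat) : rmat :=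
  RMat (IZR (za m)) (IZR (zb m)) (IZR (zc m)) (IZR (zd m)).

(* ---------- points of P^1(C): None is the point at infinity ---------- *)
Definition pt := option C.

Definition in_h (z : C) : Prop := 0 < Im z.
Definition is_rat (x : R) : Prop :=
  exists p q : Z, q <> 0%Z /\ x = IZR p / IZR q.
Definition is_cusp (p : pt) : Prop :=
  match p with
  | None => True
  | Some z => Im z = 0 /\ is_rat (Re z)
  end.
Definition in_hstar (p : pt) : Prop :=
  is_cusp p \/ exists z, p = Some z /\ in_h z.

Definition mob (m : rmat) (p : pt) : pt :=
  match p with
  | None => if Req_EM_T (rc m) 0 then None else Some (RtoC (ra m / rc m))
  | Some z =>
      if Req_EM_T (rc m * Re z + rd m) 0 then
        if Req_EM_T (rc m * Im z) 0 then None
        else Some ((RtoC (ra m) * z + RtoC (rb m)) / (RtoC (rc m) * z + RtoC (rd m)))%C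
      else Some ((RtoC (ra m) * z + RtoC (rb m)) / (RtoC (rc m) * z + RtoC (rd m)))%C
  end.

Definition pconj (p : pt) : pt :=
  match p with None => None | Some z => Some (Cconj z) end.

Definition cmob (J : rmat) (p : pt) : pt := mob J (pconj p).

Definition is_complex_conjugation (J : rmat) : Prop :=
  rdet J < 0 /\ forall z, in_h z -> cmob J (cmob J (Some z)) = Some z.

(* gamma^c = c gamma c equals gamma' in PSL_2(R) (elements of PSL_2(R)
   compared through their faithful action on h) *)
Definition conj_is (J M M' : rmat) : Prop :=
  forall z, in_h z -> cmob J (mob M (cmob J (Some z))) = mob M' (Some z).

(* A subgroup of PSL_2(Z), represented by its (sign-closed) preimage in SL_2(Z) *)
Definition is_subgroup_PSL2Z (G : zmat -> Prop) : Prop :=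
  (forall m, G m -> zdet m = 1%Z) /\
  (forall m, G m -> G (zneg m)) /\
  G zid /\
  (forall m n, G m -> G n -> G (zmul m n)) /\
  (forall m, G m -> G (zinv m)).

Definition zmat_eq_mod (N : Z) (m n : zmat) : Prop :=
  (N | za m - za n)%Z /\ (N | zb m - zb n)%Z /\
  (N | zc m - zc n)%Z /\ (N | zd m - zd n)%Z.

(* Gamma(N): image in PSL_2(Z) of the matrices = I mod N *)
Definition in_GammaN (N : Z) (m : zmat) : Prop :=
  zdet m = 1%Z /\ (zmat_eq_mod N m zid \/ zmat_eq_mod N (zneg m) zid).

Definition conj_stable (J : rmat) (H : zmat -> Prop) : Prop :=
  (forall m, H m -> exists m', H m' /\ conj_is J (rmat_of_z m) (rmat_of_z m')) /\
  (forall m', H m' -> exists m, H m /\ conj_is J (rmat_of_z m) (rmat_of_z m')).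

Definition real_congruence_group (G : zmat -> Prop) (J : rmat) : Prop :=
  is_subgroup_PSL2Z G /\ is_complex_conjugation J /\ conj_stable J G /\
  exists N : Z, (1 <= N)%Z /\
    (forall m, in_GammaN N m -> G m) /\ conj_stable J (in_GammaN N).

Definition admissible (J : rmat) (m : zmat) : Prop :=
  conj_is J (rmat_of_z m) (rmat_of_z (zinv m)).

Definition C_gamma (J : rmat) (m : zmat) (p : pt) : Prop :=
  in_hstar p /\ mob (rmat_of_z m) p = cmob J p.

(* ---------- topology of h^star (horocycle / Satake topology) ---------- *)
Definition hnbhs (p : pt) (U : pt -> Prop) : Prop :=
  match p with
  | None => exists C0, 0 < C0 /\ U None /\
              forall w, C0 < Im w -> U (Some w)
  | Some z =>
      if Rlt_dec 0 (Im z) then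
        exists r, 0 < r /\ r <= Im z /\
          forall w, Cmod (w - z)%C < r -> U (Some w)
      else
        exists r, 0 < r /\ U (Some z) /\
          forall w, 0 < Im w -> Cmod (w - (Re z, r))%C < r -> U (Some w)
  end.

Definition in_unit_interval (t : R) : Prop := 0 <= t <= 1.

Definition homeomorphic_to_interval (S : pt -> Prop) : Prop :=
  exists (f : R -> pt) (g : pt -> R),
    (forall t, in_unit_interval t -> S (f t)) /\
    (forall p, S p -> in_unit_interval (g p)) /\
    (forall t, in_unit_interval t -> g (f t) = t) /\
    (forall p, S p -> f (g p) = p) /\
    (forall t, in_unit_interval t -> forall U, hnbhs (f t) U ->
       exists d, 0 < d /\ forall s, in_unit_interval s -> Rabs (s - t) < d -> U (f s)) /\
    (forall p, S p -> forall e, 0 < e ->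
       exists U, hnbhs p U /\ forall q, S q -> U q -> Rabs (g q - g p) < e).

(* Write the conjugation as [z |-> K conj z] with [K = [[A, B], [C, -A]]] and
   [A^2 + B C = 1] (it is an involution of determinant < 0).  Conjugating the
   unipotent generators of [Gamma(N)] by [K] yields integral matrices whose entries
   are [N A^2], [N B^2], [N C^2], [N A B], [N A C]; this forces [A], [B], [C] to be
   rational.  Admissibility [K M K = +-M^-1] gives [(K M)^2 = +-1], so [K M] is
   trace-free, which kills the imaginary part of [M z = K conj z].  What remains
   reads [al (x^2 + y^2) + be x + de = 0] with rational coefficients and
   discriminant [be^2 - 4 al de = 4]: [C_gamma] is a semicircle with rational end
   points or a vertical ray from a rational point to [oo], and in the horocycle
   topology each is an arc meeting [QP^1] exactly in its two ends. *)

From Stdlib Require Import Reals ZArith Lra Psatz Znumtheory.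
From Coquelicot Require Import Coquelicot.
Open Scope R_scope.

(** * Matrices and Moebius transformations *)

Definition den (M : rmat) (z : C) : C := (RtoC (rc M) * z + RtoC (rd M))%C.
Definition mobz (M : rmat) (z : C) : C := ((RtoC (ra M) * z + RtoC (rb M)) / den M z)%C.

Definition rmul (M N : rmat) : rmat :=
  RMat (ra M * ra N + rb M * rc N) (ra M * rb N + rb M * rd N)
       (rc M * ra N + rd M * rc N) (rc M * rb N + rd M * rd N).
Definition rscale (w : R) (M : rmat) : rmat :=
  RMat (w * ra M) (w * rb M) (w * rc M) (w * rd M).
Definition rid : rmat := RMat 1 0 0 1.
Definition rtr (M : rmat) : R := ra M + rd M.

Lemma rdet_rmul M N : rdet (rmul M N) = rdet M * rdet N.
Proof. unfold rdet, rmul; simpl; ring. Qed.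

Lemma rdet_rscale w M : rdet (rscale w M) = w * w * rdet M.
Proof. unfold rdet, rscale; simpl; ring. Qed.

Lemma rmulA M N P : rmul M (rmul N P) = rmul (rmul M N) P.
Proof. unfold rmul; simpl; f_equal; ring. Qed.

Lemma rmul_rscale_l w M N : rmul (rscale w M) N = rscale w (rmul M N).
Proof. unfold rmul, rscale; simpl; f_equal; ring. Qed.

Lemma rmul_rscale_r w M N : rmul M (rscale w N) = rscale w (rmul M N).
Proof. unfold rmul, rscale; simpl; f_equal; ring. Qed.

Lemma rmul_rid M : rmul M rid = M.
Proof. destruct M; unfold rmul, rid; simpl; f_equal; ring. Qed.

Lemma rscale_rscale v w M : rscale v (rscale w M) = rscale (v * w) M.
Proof. unfold rscale; simpl; f_equal; ring. Qed.

Lemma rdet_rmat_of_z m : rdet (rmat_of_z m) = IZR (zdet m).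
Proof. unfold rdet, zdet, rmat_of_z; simpl. rewrite minus_IZR, !mult_IZR. ring. Qed.

Lemma rmul_zinv m : zdet m = 1%Z -> rmul (rmat_of_z (zinv m)) (rmat_of_z m) = rid.
Proof.
  intros Hm. apply (f_equal IZR) in Hm. unfold zdet in Hm.
  rewrite minus_IZR, !mult_IZR in Hm.
  unfold rmul, rid, rmat_of_z, zinv; simpl. rewrite !opp_IZR. f_equal; lra.
Qed.

(* The off-diagonal entries of [X^2] are [b tr X] and [c tr X]; if [tr X <> 0] then
   [X] is diagonal with [a^2 = d^2], so [a = d] and [det X = a^2 >= 0]. *)
Lemma rtr_eq0_of_square_scalar X w :
  rdet X < 0 -> rmul X X = rscale w rid -> rtr X = 0.
Proof.
  destruct X as [a b c d]; unfold rdet, rmul, rscale, rid, rtr; simpl.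
  intros Hdet E. injection E as E1 E2 E3 E4.
  destruct (Req_dec (a + d) 0) as [|Ht]; [assumption|exfalso].
  assert (b = 0) by (apply (Rmult_eq_reg_r (a + d)); [lra|assumption]).
  assert (c = 0) by (apply (Rmult_eq_reg_r (a + d)); [lra|assumption]).
  subst b c.
  assert (Hd : (a - d) * (a + d) = 0) by nra.
  apply Rmult_integral in Hd as [Hd|Hd]; [|contradiction]. nra.
Qed.

Lemma den_re M z : Re (den M z) = rc M * Re z + rd M.
Proof. destruct z; unfold den, RtoC; simpl; ring. Qed.
Lemma den_im M z : Im (den M z) = rc M * Im z.
Proof. destruct z; unfold den, RtoC; simpl; ring. Qed.

Lemma C_neq0 (z : C) : Re z <> 0 \/ Im z <> 0 -> z <> 0%C.
Proof. destruct z as [x y]; simpl; intros [H|H] E; inversion E; auto. Qed.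

Lemma den_neq0 M z : rdet M <> 0 -> Im z <> 0 -> den M z <> 0%C.
Proof.
  intros Hd Hz. apply C_neq0. rewrite den_re, den_im. unfold rdet in Hd.
  destruct (Req_dec (rc M) 0) as [E|E].
  - left. rewrite E in *. intro. apply Hd. nra.
  - right. intro H. apply Rmult_integral in H. tauto.
Qed.

Lemma mob_Some M z : den M z <> 0%C -> mob M (Some z) = Some (mobz M z).
Proof.
  intros H. unfold mob. rewrite <- den_re, <- den_im.
  destruct (Req_EM_T (Re (den M z)) 0); [|reflexivity].
  destruct (Req_EM_T (Im (den M z)) 0); [|reflexivity].
  exfalso; apply H; destruct (den M z); simpl in *; subst; reflexivity.
Qed.

Lemma mob_None_of_den0 M z : den M z = 0%C -> mob M (Some z) = None.
Proof.
  intros H. unfold mob. rewrite <- den_re, <- den_im, H. simpl.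
  destruct (Req_EM_T 0 0); [|congruence].
  destruct (Req_EM_T 0 0); [|congruence]. reflexivity.
Qed.

Lemma Im_mobz M z : den M z <> 0%C ->
  Im (mobz M z) = rdet M * Im z / ((rc M * Re z + rd M)^2 + (rc M * Im z)^2).
Proof.
  intros H. assert (Hn : (rc M * Re z + rd M)^2 + (rc M * Im z)^2 <> 0).
  { intro E. apply H. rewrite <- den_re, <- den_im in E.
    destruct (den M z) as [u v]; simpl in E.
    apply injective_projections; simpl; nra. }
  unfold mobz, den, rdet, Cdiv, RtoC, Cmult, Cplus, Cinv, Im, Re in *.
  destruct z as [x y]; destruct M; simpl in *. field. contradict Hn. lra.
Qed.

Lemma Im_mobz_neq0 M z : rdet M <> 0 -> Im z <> 0 -> Im (mobz M z) <> 0.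
Proof.
  intros HM Hz. rewrite Im_mobz by (apply den_neq0; assumption).
  pose proof (den_neq0 M z HM Hz) as Hd. rewrite <- den_re, <- den_im.
  assert (0 < Re (den M z) ^ 2 + Im (den M z) ^ 2).
  { destruct (den M z) as [u v]; simpl.
    destruct (Req_dec u 0) as [->|Hu].
    - assert (v <> 0) by (intros ->; now apply Hd). nra.
    - nra. }
  intro E. unfold Rdiv in E. apply Rmult_integral in E as [E|E].
  - apply Rmult_integral in E; tauto.
  - apply Rinv_neq_0_compat in E; lra.
Qed.

Lemma mobz_rmul M N z : den N z <> 0%C -> den M (mobz N z) <> 0%C ->
  mobz M (mobz N z) = mobz (rmul M N) z.
Proof.
  intros H1 H2. unfold mobz, den in *; destruct M, N; simpl in *.
  rewrite !RtoC_plus, !RtoC_mult. field. split; [|exact H1].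
  intro E. apply H2.
  replace (RtoC rc * ((RtoC ra0 * z + RtoC rb0) / (RtoC rc0 * z + RtoC rd0)) + RtoC rd)%C with
    ((RtoC rc * (RtoC ra0 * z + RtoC rb0) + RtoC rd * (RtoC rc0 * z + RtoC rd0))
       / (RtoC rc0 * z + RtoC rd0))%C by (field; exact H1).
  replace (RtoC rc * (RtoC ra0 * z + RtoC rb0) + RtoC rd * (RtoC rc0 * z + RtoC rd0))%C
    with ((RtoC rc * RtoC ra0 + RtoC rd * RtoC rc0) * z
          + (RtoC rc * RtoC rb0 + RtoC rd * RtoC rd0))%C by ring.
  rewrite E. unfold Cdiv. apply Cmult_0_l.
Qed.

Lemma Cconj_mobz M z : den M z <> 0%C -> Cconj (mobz M z) = mobz M (Cconj z).
Proof.
  intros H.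
  assert (Hn : (rc M * Re z + rd M) * (rc M * Re z + rd M) + (rc M * Im z) * (rc M * Im z) <> 0).
  { intro E. apply H. rewrite <- den_re, <- den_im in E.
    destruct (den M z) as [u v]; simpl in E. apply injective_projections; simpl; nra. }
  unfold mobz, den, Cdiv, Cconj, RtoC, Cmult, Cplus, Cinv, Im, Re in *.
  destruct z as [x y]; destruct M; simpl in *.
  f_equal; field; contradict Hn; lra.
Qed.

Lemma Im_Cconj z : Im (Cconj z) = - Im z.
Proof. destruct z; reflexivity. Qed.

Lemma Cconj_Cconj z : Cconj (Cconj z) = z.
Proof. destruct z; unfold Cconj; simpl; f_equal; ring. Qed.

Lemma cmob_Some J z : rdet J <> 0 -> Im z <> 0 ->
  cmob J (Some z) = Some (Cconj (mobz J z)).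
Proof.
  intros HJ Hz. unfold cmob, pconj.
  rewrite mob_Some by (apply den_neq0; [|rewrite Im_Cconj]; lra).
  rewrite Cconj_mobz by (apply den_neq0; lra). reflexivity.
Qed.

Lemma mob_Some_nonreal M z : rdet M <> 0 -> Im z <> 0 -> mob M (Some z) = Some (mobz M z).
Proof. intros. apply mob_Some, den_neq0; assumption. Qed.

(* The two complex conjugations cancel, so [c gamma c] acts on [h] through [J M J]. *)
Lemma mobz_of_conj_is J M M' : rdet J <> 0 -> rdet M <> 0 -> rdet M' <> 0 ->
  conj_is J M M' -> forall z, 0 < Im z -> mobz (rmul (rmul J M) J) z = mobz M' z.
Proof.
  intros HJ HM HM' Hc z Hz. specialize (Hc z Hz).
  assert (Hz0 : Im z <> 0) by lra.
  assert (H1 : Im (Cconj (mobz J z)) <> 0)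
    by (rewrite Im_Cconj; apply Ropp_neq_0_compat, Im_mobz_neq0; assumption).
  assert (H2 : Im (mobz M (Cconj (mobz J z))) <> 0) by (apply Im_mobz_neq0; assumption).
  rewrite cmob_Some, mob_Some_nonreal, cmob_Some, mob_Some_nonreal in Hc by assumption.
  transitivity (Cconj (mobz J (mobz M (Cconj (mobz J z))))); [|congruence].
  rewrite Cconj_mobz, Cconj_mobz, Cconj_Cconj, !mobz_rmul; try reflexivity;
    repeat first [ assumption | apply den_neq0 | apply Im_mobz_neq0
                 | rewrite Im_Cconj; apply Ropp_neq_0_compat
                 | rewrite rdet_rmul; apply Rmult_integral_contrapositive; split ].
Qed.

Lemma mobz_eq_at_iy X Y y : y <> 0 -> rdet X <> 0 -> rdet Y <> 0 ->
  mobz X (0, y) = mobz Y (0, y) ->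
  rb X * rd Y - ra X * rc Y * y ^ 2 = rb Y * rd X - ra Y * rc X * y ^ 2 /\
  rb X * rc Y + ra X * rd Y = rb Y * rc X + ra Y * rd X.
Proof.
  intros Hy HX HY E.
  pose proof (den_neq0 X (0, y) HX Hy) as DX. pose proof (den_neq0 Y (0, y) HY Hy) as DY.
  unfold mobz in E.
  assert (E2 : ((RtoC (ra X) * (0, y) + RtoC (rb X)) * den Y (0, y) =
                (RtoC (ra Y) * (0, y) + RtoC (rb Y)) * den X (0, y))%C).
  { replace (RtoC (ra X) * (0, y) + RtoC (rb X))%C with
      ((RtoC (ra X) * (0, y) + RtoC (rb X)) / den X (0, y) * den X (0, y))%C by (field; auto).
    rewrite E. field. auto. }
  unfold den, RtoC, Cmult, Cplus in E2; simpl in E2. injection E2 as E3 E4.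
  split; [nra|]. apply (Rmult_eq_reg_l y); [nra|auto].
Qed.

Lemma rscale_of_mobz_eq X Y : rdet X <> 0 -> rdet Y = 1 ->
  (forall z, 0 < Im z -> mobz X z = mobz Y z) -> exists w, X = rscale w Y.
Proof.
  intros HX HY H.
  destruct (mobz_eq_at_iy X Y 1) as [A1 A2]; try (apply H; simpl); try lra.
  destruct (mobz_eq_at_iy X Y 2) as [B1 B2]; try (apply H; simpl); try lra.
  assert (R1 : ra X * rc Y = ra Y * rc X) by nra.
  assert (R3 : rb X * rd Y = rb Y * rd X) by nra.
  exists (ra X * rd Y - rc X * rb Y).
  revert HY R1 A2 R3. unfold rdet, rscale.
  destruct X as [x1 x2 x3 x4], Y as [y1 y2 y3 y4]; simpl. intros D R1 R2 R3.
  pose proof (f_equal (Rmult y1) R1). pose proof (f_equal (Rmult y2) R1).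
  pose proof (f_equal (Rmult y3) R1). pose proof (f_equal (Rmult y4) R1).
  pose proof (f_equal (Rmult y1) R2). pose proof (f_equal (Rmult y2) R2).
  pose proof (f_equal (Rmult y3) R2). pose proof (f_equal (Rmult y4) R2).
  pose proof (f_equal (Rmult y1) R3). pose proof (f_equal (Rmult y2) R3).
  pose proof (f_equal (Rmult y3) R3). pose proof (f_equal (Rmult y4) R3).
  pose proof (f_equal (Rmult x1) D). pose proof (f_equal (Rmult x2) D).
  pose proof (f_equal (Rmult x3) D). pose proof (f_equal (Rmult x4) D).
  f_equal; lra.
Qed.

Lemma mob_rid p : mob rid p = p.
Proof.
  destruct p as [z|]; unfold mob, rid; simpl.
  - destruct (Req_EM_T (0 * Re z + 1) 0); [lra|].
    f_equal. replace (RtoC 0 * z + RtoC 1)%C with (RtoC 1) by ring.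
    field; apply C_neq0; simpl; lra.
  - destruct (Req_dec_T 0 0); [reflexivity|lra].
Qed.

Lemma mobz_rscale w M z : w <> 0 -> den M z <> 0%C -> mobz (rscale w M) z = mobz M z.
Proof.
  intros Hw HM. unfold mobz, den in *; destruct M; simpl.
  rewrite !RtoC_mult.
  replace (RtoC w * RtoC rc * z + RtoC w * RtoC rd)%C
    with (RtoC w * (RtoC rc * z + RtoC rd))%C by ring.
  field. split; [exact HM|]. intro E. injection E. lra.
Qed.

Lemma den_rscale w M z : den (rscale w M) z = (RtoC w * den M z)%C.
Proof. unfold den, rscale; simpl. rewrite !RtoC_mult. ring. Qed.

Lemma mob_rscale w M p : w <> 0 -> mob (rscale w M) p = mob M p.
Proof.
  intros Hw. destruct p as [z|].
  - destruct (Ceq_dec (den M z) 0) as [H|H].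
    + rewrite !mob_None_of_den0; [reflexivity|assumption|].
      rewrite den_rscale, H. ring.
    + rewrite !mob_Some, mobz_rscale; try assumption; [reflexivity|].
      rewrite den_rscale. apply Cmult_neq_0; [|assumption].
      intro E. injection E. lra.
  - unfold mob, rscale; simpl.
    destruct (Req_EM_T (w * rc M) 0) as [E|E]; destruct (Req_EM_T (rc M) 0) as [E'|E'].
    + reflexivity.
    + exfalso. apply Rmult_integral in E as [E|E]; contradiction.
    + exfalso. apply E. rewrite E'. ring.
    + do 2 f_equal. field. split; assumption.
Qed.

Lemma cmob_rscale w K p : w <> 0 -> cmob (rscale w K) p = cmob K p.
Proof. intros. apply mob_rscale. assumption. Qed.

(** * Normal form of the conjugation *)

Definition rtrfree (A B C : R) : rmat := RMat A B C (- A).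

(* [J J] acts trivially on [h], hence is scalar, and [det J < 0] then forces [tr J = 0]. *)
Lemma complex_conjugation_normal_form J : is_complex_conjugation J ->
  exists s A B C, 0 < s /\ A * A + B * C = 1 /\ J = rscale s (rtrfree A B C).
Proof.
  intros [Hdet Hinv].
  assert (Hc : conj_is J rid rid).
  { intros z Hz. rewrite !mob_rid. apply Hinv; assumption. }
  assert (Hid : rdet rid = 1) by (unfold rdet, rid; simpl; ring).
  assert (Hmobz := mobz_of_conj_is J rid rid ltac:(lra) ltac:(lra) ltac:(lra) Hc).
  rewrite rmul_rid in Hmobz.
  destruct (rscale_of_mobz_eq (rmul J J) rid) as [w Hw]; try assumption.
  { rewrite rdet_rmul. nra. }
  pose proof (rtr_eq0_of_square_scalar J w Hdet Hw) as Htr. unfold rtr in Htr.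
  set (s := sqrt (- rdet J)).
  assert (Hs : 0 < s) by (apply sqrt_lt_R0; lra).
  assert (Hss : s * s = - rdet J) by (apply sqrt_sqrt; lra).
  exists s, (ra J / s), (rb J / s), (rc J / s). split; [exact Hs|]. split.
  - unfold rdet in Hss. apply (Rmult_eq_reg_l (s * s)); [|nra].
    transitivity (ra J * ra J + rb J * rc J); [field; lra|].
    replace (rd J) with (- ra J) in Hss by lra. lra.
  - destruct J as [a b c d]; unfold rscale, rtrfree; simpl in *.
    replace d with (- a) by lra. f_equal; field; lra.
Qed.

Lemma rdet_rtrfree A B C : rdet (rtrfree A B C) = - (A * A + B * C).
Proof. unfold rdet, rtrfree; simpl; ring. Qed.

Lemma rmul_conj_of_conj_is s K M M' : 0 < s -> rdet K = -1 -> rdet M = 1 -> rdet M' = 1 ->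
  conj_is (rscale s K) M M' ->
  exists w, (w = 1 \/ w = -1) /\ rmul (rmul K M) K = rscale w M'.
Proof.
  intros Hs HK HM HM' Hc.
  assert (HsK : rdet (rscale s K) <> 0) by (rewrite rdet_rscale; nra).
  assert (HX : rdet (rmul (rmul K M) K) = 1) by (rewrite !rdet_rmul, HK, HM; ring).
  destruct (rscale_of_mobz_eq (rmul (rmul K M) K) M') as [w Hw]; [lra|assumption| |].
  - intros z Hz. rewrite <- (mobz_of_conj_is (rscale s K) M M' HsK ltac:(lra) ltac:(lra) Hc z Hz).
    rewrite rmul_rscale_l, rmul_rscale_r, rmul_rscale_l, rscale_rscale.
    symmetry. apply mobz_rscale; [nra|]. apply den_neq0; lra.
  - exists w. split; [|exact Hw].
    assert (Hw2 : w * w = 1) by (rewrite <- HX, Hw, rdet_rscale, HM'; ring).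
    assert (Hf : (w - 1) * (w + 1) = 0) by lra.
    apply Rmult_integral in Hf as [Hf|Hf]; lra.
Qed.

(* [K M K = +-M^-1] gives [(K M)^2 = +-1], and [det (K M) = -1]. *)
Lemma rtr_rmul_eq0_of_admissible s K m : 0 < s -> rdet K = -1 -> zdet m = 1%Z ->
  admissible (rscale s K) m -> rtr (rmul K (rmat_of_z m)) = 0.
Proof.
  intros Hs HK Hm Hadm.
  assert (Hinv : zdet (zinv m) = 1%Z) by (unfold zdet, zinv in *; simpl; lia).
  destruct (rmul_conj_of_conj_is s K (rmat_of_z m) (rmat_of_z (zinv m)))
    as (w & _ & E); rewrite ?rdet_rmat_of_z, ?Hm, ?Hinv; try reflexivity; try assumption.
  apply (rtr_eq0_of_square_scalar _ w).
  - rewrite rdet_rmul, HK, rdet_rmat_of_z, Hm. simpl. lra.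
  - rewrite rmulA, E, rmul_rscale_l, rmul_zinv by assumption. reflexivity.
Qed.

(** * Rationality of the conjugation *)

Section IntegerSquares.
Local Open Scope Z_scope.

Lemma Z_gcd_split a b : 0 < Z.gcd a b ->
  exists a' b', a = a' * Z.gcd a b /\ b = b' * Z.gcd a b /\ Z.gcd a' b' = 1.
Proof.
  intros Hg.
  destruct (Z.gcd_divide_l a b) as [a' Ha]. destruct (Z.gcd_divide_r a b) as [b' Hb].
  exists a', b'. split; [assumption|]. split; [assumption|].
  pose proof (Z.gcd_mul_mono_r a' b' (Z.gcd a b)) as E.
  rewrite <- Ha, <- Hb, Z.abs_eq in E by lia.
  apply (Z.mul_cancel_r _ _ (Z.gcd a b)); [lia|]. rewrite <- E. ring.
Qed.

Lemma Z_divide_1_of_gcd a b d : Z.gcd a b = 1 -> (d | a) -> (d | b) -> d = 1 \/ d = -1.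
Proof.
  intros H Ha Hb. apply Z.divide_1_r. rewrite <- H. apply Z.gcd_greatest; assumption.
Qed.

Lemma Z_gcd_pos_l a b : 0 < a -> 0 < Z.gcd a b.
Proof.
  intros Ha. pose proof (Z.gcd_nonneg a b).
  destruct (Z.eq_dec (Z.gcd a b) 0) as [E|E]; [apply Z.gcd_eq_0 in E|]; lia.
Qed.

Lemma Z_divide_of_square_divide N k : 0 < N -> (N * N | k * k) -> (N | k).
Proof.
  intros HN Hd.
  pose proof (Z_gcd_pos_l N k HN) as Hg.
  destruct (Z_gcd_split N k Hg) as (N' & k' & EN & Ek & G).
  set (g := Z.gcd N k) in *.
  assert (Hd' : (N' * N' | k' * k')).
  { apply (Z.mul_divide_cancel_r _ _ (g * g)); [lia|].
    replace (N' * N' * (g * g)) with (N * N) by (rewrite EN; ring).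
    replace (k' * k' * (g * g)) with (k * k) by (rewrite Ek; ring). exact Hd. }
  assert (H1 : (N' | k')).
  { apply (Z.gauss _ k'); [|exact G]. eapply Z.divide_trans; [|exact Hd'].
    apply Z.divide_factor_l. }
  destruct (Z_divide_1_of_gcd N' k' N' G (Z.divide_refl _) H1) as [E|E];
    rewrite EN, Ek, E; [exists k'|exists (- k')]; ring.
Qed.

Lemma Z_square_of_coprime_mul_square n m u : 0 < n -> Z.gcd n m = 1 -> n * m = u * u ->
  exists g, n = g * g.
Proof.
  intros Hn G E.
  pose proof (Z_gcd_pos_l n u Hn) as Hg.
  destruct (Z_gcd_split n u Hg) as (n' & u' & En & Eu & G').
  set (g := Z.gcd n u) in *.
  assert (E2 : g * (u' * u') = n' * m).
  { apply (Z.mul_cancel_l _ _ g); [lia|].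
    transitivity (u * u); [rewrite Eu; ring|]. rewrite <- E, En; ring. }
  assert (D1 : (n' | g)).
  { apply (Z.gauss _ (u' * u')).
    - rewrite Z.mul_comm, E2. apply Z.divide_factor_l.
    - apply Zgcd_1_rel_prime, rel_prime_mult; apply Zgcd_1_rel_prime; exact G'. }
  assert (Gm : Z.gcd g m = 1).
  { assert (Hd : (Z.gcd g m | n)).
    { eapply Z.divide_trans; [apply Z.gcd_divide_l|]. exists n'. exact En. }
    destruct (Z_divide_1_of_gcd n m _ G Hd (Z.gcd_divide_r g m)) as [H|H]; [exact H|].
    pose proof (Z.gcd_nonneg g m); lia. }
  assert (D2 : (g | n')).
  { apply (Z.gauss _ m); [|exact Gm]. rewrite Z.mul_comm, <- E2. apply Z.divide_factor_l. }
  exists g. rewrite En. f_equal. apply Z.divide_antisym_nonneg; try assumption; nia.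
Qed.

Lemma Z_gcd_eq1_of_mul_square_pred n m l : m * l = (1 - n) * (1 - n) -> Z.gcd n m = 1.
Proof.
  intros E.
  assert (Hd1 : (Z.gcd n m | 1)).
  { replace 1 with ((1 - n) * (1 - n) + n * (2 - n)) by ring.
    apply Z.divide_add_r.
    - rewrite <- E. apply Z.divide_mul_l, Z.gcd_divide_r.
    - apply Z.divide_mul_l, Z.gcd_divide_l. }
  apply Z.divide_1_r in Hd1. pose proof (Z.gcd_nonneg n m). lia.
Qed.

End IntegerSquares.

Lemma is_rat_IZR k : is_rat (IZR k).
Proof. exists k, 1%Z. split; [lia|]. simpl. field. Qed.

Lemma is_rat_plus x y : is_rat x -> is_rat y -> is_rat (x + y).
Proof.
  intros (p & q & Hq & ->) (p' & q' & Hq' & ->). exists (p * q' + p' * q)%Z, (q * q')%Z.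
  split; [lia|]. rewrite plus_IZR, !mult_IZR. field. split; apply not_0_IZR; assumption.
Qed.

Lemma is_rat_mult x y : is_rat x -> is_rat y -> is_rat (x * y).
Proof.
  intros (p & q & Hq & ->) (p' & q' & Hq' & ->). exists (p * p')%Z, (q * q')%Z.
  split; [lia|]. rewrite !mult_IZR. field. split; apply not_0_IZR; assumption.
Qed.

Lemma is_rat_opp x : is_rat x -> is_rat (- x).
Proof.
  intros (p & q & Hq & ->). exists (- p)%Z, q. split; [assumption|].
  rewrite opp_IZR. field. apply not_0_IZR; assumption.
Qed.

Lemma is_rat_minus x y : is_rat x -> is_rat y -> is_rat (x - y).
Proof. intros. apply is_rat_plus, is_rat_opp; assumption. Qed.

Lemma is_rat_inv x : is_rat x -> x <> 0 -> is_rat (/ x).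
Proof.
  intros (p & q & Hq & ->) Hx.
  assert (p <> 0%Z) by (intros ->; apply Hx; unfold Rdiv; ring).
  exists q, p. split; [assumption|]. field. split; apply not_0_IZR; assumption.
Qed.

Lemma is_rat_div x y : is_rat x -> is_rat y -> y <> 0 -> is_rat (x / y).
Proof. intros. apply is_rat_mult, is_rat_inv; assumption. Qed.

Lemma is_rat_of_square x (g : Z) : x * x = IZR g * IZR g -> is_rat x.
Proof.
  intros E. assert (Hf : (x - IZR g) * (x + IZR g) = 0) by lra.
  apply Rmult_integral in Hf as [Hf|Hf].
  - replace x with (IZR g) by lra. apply is_rat_IZR.
  - replace x with (- IZR g) by lra. apply is_rat_opp, is_rat_IZR.
Qed.

Definition is_int (x : R) : Prop := exists k : Z, x = IZR k.

Lemma int_nonneg_of_square x (n : Z) : x * x = IZR n -> (0 <= n)%Z.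
Proof. intros E. apply le_IZR. rewrite <- E. nra. Qed.

(* [n = A^2] and [m = B^2] are coprime since [m C^2 = (1 - n)^2], and [n m = (A B)^2]
   is a square because [N^2 | (N A B)^2]; hence [n] is a square and [A] is rational. *)
Lemma is_rat_of_int_squares (N : Z) A B C : (0 < N)%Z -> A * A + B * C = 1 ->
  is_int (A * A) -> is_int (B * B) -> is_int (C * C) ->
  is_int (IZR N * (A * B)) -> is_int (IZR N * (A * C)) ->
  is_rat A /\ is_rat B /\ is_rat C.
Proof.
  intros HN Hq [n Hn] [m Hm] [l Hl] [u Hu] [v Hv].
  assert (Eml : (m * l = (1 - n) * (1 - n))%Z).
  { apply eq_IZR. rewrite !mult_IZR, !minus_IZR, <- Hm, <- Hl, <- Hn.
    replace (A * A) with (1 - B * C) by lra. simpl. ring. }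
  pose proof (int_nonneg_of_square B m Hm) as Hm0.
  pose proof (int_nonneg_of_square C l Hl) as Hl0.
  destruct (Req_dec A 0) as [HA|HA].
  - assert (n = 0%Z) by (apply eq_IZR; rewrite <- Hn, HA; ring). subst n.
    assert (m = 1%Z /\ l = 1%Z) as [-> ->]
      by (apply Z.eq_mul_1_nonneg; [assumption|lia]).
    rewrite HA. split; [apply (is_rat_IZR 0)|].
    split; apply (is_rat_of_square _ 1); simpl; lra.
  - assert (Hn0 : (0 < n)%Z) by (apply lt_IZR; rewrite <- Hn; nra).
    assert (Hdiv : (N | u)%Z).
    { apply Z_divide_of_square_divide; [assumption|]. exists (n * m)%Z.
      apply eq_IZR. rewrite !mult_IZR, <- Hu, <- Hn, <- Hm. ring. }
    destruct Hdiv as [k ->].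
    assert (Enm : (n * m = k * k)%Z).
    { apply eq_IZR. apply (Rmult_eq_reg_l (IZR N * IZR N)).
      - rewrite !mult_IZR in *. rewrite <- Hn, <- Hm.
        transitivity ((IZR N * (A * B)) * (IZR N * (A * B))); [ring|]. rewrite Hu. ring.
      - apply Rmult_integral_contrapositive. split; apply not_0_IZR; lia. }
    pose proof (Z_gcd_eq1_of_mul_square_pred n m l Eml) as G.
    destruct (Z_square_of_coprime_mul_square n m k Hn0 G Enm) as [g Hg].
    assert (RA : is_rat A) by (apply (is_rat_of_square A g); rewrite Hn, Hg, mult_IZR; ring).
    assert (HN' : IZR N <> 0) by (apply not_0_IZR; lia).
    assert (HNA : IZR N * A <> 0) by (apply Rmult_integral_contrapositive; split; assumption).
    split; [exact RA|]. split.
    + replace B with (IZR (k * N) / (IZR N * A)) by (rewrite <- Hu; field; split; assumption).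
      apply is_rat_div; [apply is_rat_IZR|apply is_rat_mult; [apply is_rat_IZR|]|]; assumption.
    + replace C with (IZR v / (IZR N * A)) by (rewrite <- Hv; field; split; assumption).
      apply is_rat_div; [apply is_rat_IZR|apply is_rat_mult; [apply is_rat_IZR|]|]; assumption.
Qed.

Lemma in_GammaN_divide N m : in_GammaN N m -> (N | zb m)%Z /\ (N | zc m)%Z.
Proof.
  intros [_ [(_ & Hb & Hc & _)|(_ & Hb & Hc & _)]]; simpl in *; rewrite Z.sub_0_r in Hb, Hc.
  - split; assumption.
  - split; apply Z.divide_opp_r; assumption.
Qed.

Lemma in_GammaN_upper N : in_GammaN N (ZMat 1 N 0 1).
Proof.
  split; [unfold zdet; cbn [za zb zc zd]; ring|]. left.
  unfold zmat_eq_mod, zid; cbn [za zb zc zd]. rewrite !Z.sub_diag, Z.sub_0_r.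
  repeat split; first [apply Z.divide_0_r | apply Z.divide_refl].
Qed.

Lemma in_GammaN_lower N : in_GammaN N (ZMat 1 0 N 1).
Proof.
  split; [unfold zdet; cbn [za zb zc zd]; ring|]. left.
  unfold zmat_eq_mod, zid; cbn [za zb zc zd]. rewrite !Z.sub_diag, Z.sub_0_r.
  repeat split; first [apply Z.divide_0_r | apply Z.divide_refl].
Qed.

Lemma is_int_of_divide (N z : Z) w x : (0 < N)%Z -> (w = 1 \/ w = -1) -> (N | z)%Z ->
  IZR N * x = w * IZR z -> is_int x.
Proof.
  intros HN Hw [k ->] E. rewrite mult_IZR in E.
  assert (HN' : IZR N <> 0) by (apply not_0_IZR; lia).
  destruct Hw as [->| ->]; [exists k|exists (- k)%Z; rewrite opp_IZR];
    apply (Rmult_eq_reg_l (IZR N)); try assumption; lra.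
Qed.

Lemma is_int_of_shift (z : Z) w x : (w = 1 \/ w = -1) -> 1 + x = w * IZR z -> is_int x.
Proof.
  intros [->| ->] E; [exists (z - 1)%Z|exists (- z - 1)%Z];
    rewrite ?minus_IZR, ?opp_IZR; simpl; lra.
Qed.

Lemma conj_GammaN s K N u : 0 < s -> rdet K = -1 ->
  conj_stable (rscale s K) (in_GammaN N) -> in_GammaN N u ->
  exists w m', (w = 1 \/ w = -1) /\ in_GammaN N m' /\
    rmul (rmul K (rmat_of_z u)) K = rscale w (rmat_of_z m').
Proof.
  intros Hs HK [Hst _] Hu. destruct (Hst u Hu) as (m' & Hm' & Hc).
  destruct (rmul_conj_of_conj_is s K (rmat_of_z u) (rmat_of_z m')) as (w & Hw & E);
    rewrite ?rdet_rmat_of_z, ?(proj1 Hu), ?(proj1 Hm'); try reflexivity; try assumption.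
  exists w, m'. auto.
Qed.

(* [K [[1, N], [0, 1]] K = [[1 + N A C, -N A^2], [N C^2, 1 - N A C]] and
   [K [[1, 0], [N, 1]] K = [[1 + N A B, N B^2], [-N A^2, 1 - N A B]] are +- matrices
   of [Gamma(N)], whose off-diagonal entries are divisible by [N]. *)
Lemma rtrfree_rat_of_GammaN_stable (N : Z) s A B C : (1 <= N)%Z -> 0 < s ->
  A * A + B * C = 1 -> conj_stable (rscale s (rtrfree A B C)) (in_GammaN N) ->
  is_rat A /\ is_rat B /\ is_rat C.
Proof.
  intros HN Hs Hq Hst.
  assert (HN0 : (0 < N)%Z) by lia.
  assert (HK : rdet (rtrfree A B C) = -1) by (rewrite rdet_rtrfree, Hq; ring).
  destruct (conj_GammaN s _ N _ Hs HK Hst (in_GammaN_upper N)) as (w1 & m1 & Hw1 & Hm1 & E1).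
  destruct (conj_GammaN s _ N _ Hs HK Hst (in_GammaN_lower N)) as (w2 & m2 & Hw2 & Hm2 & E2).
  destruct (in_GammaN_divide N m1 Hm1) as [Db1 Dc1].
  destruct (in_GammaN_divide N m2 Hm2) as [Db2 _].
  unfold rmul, rtrfree, rscale, rmat_of_z in E1, E2; simpl in E1, E2.
  injection E1 as E11 E12 E13 _. injection E2 as E21 E22 _ _.
  apply (is_rat_of_int_squares N); try assumption.
  - apply (is_int_of_divide N (zb m1) (- w1)); [assumption|lra|assumption|lra].
  - apply (is_int_of_divide N (zb m2) w2); [assumption|lra|assumption|lra].
  - apply (is_int_of_divide N (zc m1) w1); [assumption|lra|assumption|lra].
  - apply (is_int_of_shift (za m2) w2); [assumption|nra].
  - apply (is_int_of_shift (za m1) w1); [assumption|nra].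
Qed.

(** * The equation of C_gamma *)

Definition quad (al be de x y : R) : R := al * (x * x + y * y) + be * x + de.

(* Coefficients of [(a z + b) (c' conj z + d') - (a' conj z + b') (c z + d)], the
   cross product deciding whether [M z] equals the image [K conj z] of [z] under
   the anti-Moebius map of [K] = [[a', b'], [c', d']]. *)
Definition cross_a (M K : rmat) : R := ra M * rc K - ra K * rc M.
Definition cross_b (M K : rmat) : R := ra M * rd K - ra K * rd M + rb M * rc K - rb K * rc M.
Definition cross_d (M K : rmat) : R := rb M * rd K - rb K * rd M.
Definition cross_t (M K : rmat) : R := ra M * rd K + ra K * rd M - rb M * rc K - rb K * rc M.

Lemma cross_discriminant M K :
  cross_b M K * cross_b M K - 4 * cross_a M K * cross_d M K
  = cross_t M K * cross_t M K - 4 * rdet M * rdet K.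
Proof. unfold cross_a, cross_b, cross_d, cross_t, rdet. ring. Qed.

Lemma Cdiv_eq_iff (u1 v1 u2 v2 : C) : v1 <> 0%C -> v2 <> 0%C ->
  (u1 / v1 = u2 / v2 <-> u1 * v2 - u2 * v1 = 0)%C.
Proof.
  intros H1 H2. split; intros E.
  - replace u1 with (u1 / v1 * v1)%C by (field; assumption). rewrite E. field. assumption.
  - assert (E' : (u1 * v2 = u2 * v1)%C).
    { replace (u1 * v2)%C with (u1 * v2 - u2 * v1 + u2 * v1)%C by ring. rewrite E. ring. }
    replace u1 with (u1 * v2 / v2)%C by (field; assumption).
    rewrite E'. field. split; assumption.
Qed.

Lemma Rdiv_eq_iff a b c d : b <> 0 -> d <> 0 -> (a / b = c / d <-> a * d - c * b = 0).
Proof.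
  intros Hb Hd.
  replace (a * d - c * b) with ((a / b - c / d) * (b * d)) by (field; split; assumption).
  split; intros E.
  - rewrite E. ring.
  - apply Rmult_integral in E as [E|E]; [lra|].
    apply Rmult_integral in E as [E|E]; contradiction.
Qed.

Lemma cross_conj_components M K x y :
  ((RtoC (ra M) * (x, y) + RtoC (rb M)) * den K (Cconj (x, y))
   - (RtoC (ra K) * Cconj (x, y) + RtoC (rb K)) * den M (x, y))%C
  = (quad (cross_a M K) (cross_b M K) (cross_d M K) x y, y * cross_t M K).
Proof.
  unfold quad, cross_a, cross_b, cross_d, cross_t, den, Cconj, Cminus, Copp, Cplus, Cmult, RtoC;
    simpl. f_equal; ring.
Qed.

Lemma mob_eq_cmob_nonreal M K x y : rdet M <> 0 -> rdet K <> 0 -> y <> 0 ->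
  (mob M (Some (x, y)) = cmob K (Some (x, y)) <->
   quad (cross_a M K) (cross_b M K) (cross_d M K) x y = 0 /\ cross_t M K = 0).
Proof.
  intros HM HK Hy. unfold cmob, pconj.
  assert (DM : den M (x, y) <> 0%C) by (apply den_neq0; assumption).
  assert (DK : den K (Cconj (x, y)) <> 0%C) by (apply den_neq0; simpl; lra).
  rewrite !mob_Some by assumption.
  transitivity (mobz M (x, y) = mobz K (Cconj (x, y))); [split; congruence|].
  unfold mobz. rewrite (Cdiv_eq_iff _ _ _ _ DM DK), cross_conj_components. unfold RtoC.
  split.
  - intros E. injection E as E1 E2. split; [assumption|].
    apply Rmult_integral in E2 as [E2|E2]; [contradiction|assumption].
  - intros [-> ->]. f_equal. ring.
Qed.

Lemma mob_real_den0 M x : rc M * x + rd M = 0 -> mob M (Some (x, 0)) = None.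
Proof.
  intros H. apply mob_None_of_den0. unfold den, RtoC, Cmult, Cplus; simpl.
  f_equal; lra.
Qed.

Lemma mob_real_den_neq0 M x : rc M * x + rd M <> 0 ->
  mob M (Some (x, 0)) = Some (RtoC ((ra M * x + rb M) / (rc M * x + rd M))).
Proof.
  intros H. rewrite mob_Some.
  - f_equal. unfold mobz, den, RtoC, Cdiv, Cinv, Cmult, Cplus; simpl. f_equal; field; lra.
  - intro E. apply H. unfold den, RtoC, Cmult, Cplus in E; simpl in E.
    injection E as E _. lra.
Qed.

Lemma num_neq0_of_den0 M x : rdet M <> 0 -> rc M * x + rd M = 0 -> ra M * x + rb M <> 0.
Proof.
  intros HM Hd Hn. apply HM. unfold rdet.
  replace (rd M) with (- (rc M * x)) by lra. replace (rb M) with (- (ra M * x)) by lra. ring.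
Qed.

Lemma mob_eq_cmob_real M K x : rdet M <> 0 -> rdet K <> 0 ->
  (mob M (Some (x, 0)) = cmob K (Some (x, 0)) <->
   quad (cross_a M K) (cross_b M K) (cross_d M K) x 0 = 0).
Proof.
  intros HM HK. unfold cmob, pconj.
  replace (Cconj (x, 0)) with (x, 0) by (unfold Cconj; simpl; f_equal; ring).
  replace (quad (cross_a M K) (cross_b M K) (cross_d M K) x 0) with
    ((ra M * x + rb M) * (rc K * x + rd K) - (ra K * x + rb K) * (rc M * x + rd M))
    by (unfold quad, cross_a, cross_b, cross_d; ring).
  destruct (Req_dec (rc M * x + rd M) 0) as [DM|DM];
    destruct (Req_dec (rc K * x + rd K) 0) as [DK|DK].
  - rewrite !mob_real_den0 by assumption. rewrite DM, DK. split; [intros _; ring|reflexivity].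
  - rewrite mob_real_den0, mob_real_den_neq0 by assumption. rewrite DM.
    split; [discriminate|]. intros E. exfalso.
    apply (num_neq0_of_den0 M x HM DM). apply (Rmult_eq_reg_r (rc K * x + rd K)); lra.
  - rewrite mob_real_den_neq0, mob_real_den0 by assumption. rewrite DK.
    split; [discriminate|]. intros E. exfalso.
    apply (num_neq0_of_den0 K x HK DK). apply (Rmult_eq_reg_r (rc M * x + rd M)); lra.
  - rewrite !mob_real_den_neq0 by assumption. rewrite <- Rdiv_eq_iff by assumption.
    split; [intros E; injection E; tauto|intros ->; reflexivity].
Qed.

Lemma mob_eq_cmob_None M K : rdet M <> 0 -> rdet K <> 0 ->
  (mob M None = cmob K None <-> cross_a M K = 0).
Proof.
  intros HM HK. unfold cmob, pconj, mob, cross_a, rdet in *.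
  destruct (Req_EM_T (rc M) 0) as [EM|EM]; destruct (Req_EM_T (rc K) 0) as [EK|EK].
  - rewrite EM, EK. split; [intros _; ring|reflexivity].
  - split; [discriminate|]. intros E. exfalso. rewrite EM in *.
    assert (ra M <> 0) by (intro Ha; apply HM; rewrite Ha; ring).
    apply EK, (Rmult_eq_reg_l (ra M)); lra.
  - split; [discriminate|]. intros E. exfalso. rewrite EK in *.
    assert (ra K <> 0) by (intro Ha; apply HK; rewrite Ha; ring).
    apply EM, (Rmult_eq_reg_l (ra K)); lra.
  - rewrite <- Rdiv_eq_iff by assumption.
    split; [intros E; injection E; tauto|intros ->; reflexivity].
Qed.

(** * Semicircles and vertical rays in the horocycle topology *)

Lemma Cmod_pair_sub a b c d : Cmod ((a, b) - (c, d))%C = sqrt ((a - c) ^ 2 + (b - d) ^ 2).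
Proof. reflexivity. Qed.

Lemma sqrt_lt_of_sq_lt u r : 0 < r -> u < r * r -> sqrt u < r.
Proof.
  intros Hr H. destruct (Rle_lt_dec u 0) as [Hu|Hu].
  - rewrite sqrt_neg_0 by assumption. exact Hr.
  - rewrite <- (sqrt_square r) by lra. apply sqrt_lt_1_alt. lra.
Qed.

Lemma lt_sqrt_of_sq_lt a b : a * a < b -> a < sqrt b.
Proof.
  intros H. destruct (Rlt_le_dec a 0) as [Ha|Ha].
  - pose proof (sqrt_pos b). lra.
  - rewrite <- (sqrt_square a) by assumption. apply sqrt_lt_1_alt. nra.
Qed.

Lemma Rabs_le_Cmod_l a b c d : Rabs (a - c) <= Cmod ((a, b) - (c, d))%C.
Proof.
  rewrite Cmod_pair_sub, <- sqrt_Rsqr_abs. apply sqrt_le_1_alt.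
  rewrite <- !Rsqr_pow2. pose proof (Rle_0_sqr (a - c)). pose proof (Rle_0_sqr (b - d)). lra.
Qed.

Lemma Cmod_lt_of_Rabs a b c d r : Rabs (a - c) + Rabs (b - d) < r ->
  Cmod ((a, b) - (c, d))%C < r.
Proof.
  intros H. pose proof (Rabs_pos (a - c)). pose proof (Rabs_pos (b - d)).
  rewrite Cmod_pair_sub. apply sqrt_lt_of_sq_lt; [lra|].
  rewrite <- !Rsqr_pow2, (Rsqr_abs (a - c)), (Rsqr_abs (b - d)). unfold Rsqr. nra.
Qed.

(* The horodisc of radius [r] at the cusp [c] is [(a - c)^2 + b^2 < 2 r b]. *)
Lemma Cmod_lt_horodisc a b c r : 0 < r -> (a - c) ^ 2 + b ^ 2 < 2 * r * b ->
  Cmod ((a, b) - (c, r))%C < r.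
Proof. intros Hr H. rewrite Cmod_pair_sub. apply sqrt_lt_of_sq_lt; [assumption|]. nra. Qed.

Lemma sqrt_Rabs_sub_le u v : 0 <= u -> 0 <= v -> Rabs (sqrt u - sqrt v) <= sqrt (Rabs (u - v)).
Proof.
  intros Hu Hv. pose proof (sqrt_pos u) as Ha. pose proof (sqrt_pos v) as Hb.
  rewrite <- (sqrt_sqrt u) at 2 by assumption. rewrite <- (sqrt_sqrt v) at 2 by assumption.
  rewrite <- (sqrt_Rsqr (Rabs (sqrt u - sqrt v))) by apply Rabs_pos.
  apply sqrt_le_1_alt. rewrite <- Rsqr_abs. unfold Rsqr.
  destruct (Rle_dec (sqrt v) (sqrt u)).
  - rewrite Rabs_pos_eq by nra. nra.
  - rewrite Rabs_left by nra. nra.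
Qed.

Definition two_cusps (S : pt -> Prop) : Prop :=
  exists p q : pt, p <> q /\ is_cusp p /\ is_cusp q /\ S p /\ S q /\
    forall r, is_cusp r -> S r -> r = p \/ r = q.

Lemma hnbhs_upper_inv x y U : 0 < y -> hnbhs (Some (x, y)) U ->
  exists r, 0 < r /\ forall w, Cmod (w - (x, y))%C < r -> U (Some w).
Proof.
  intros Hy HU. unfold hnbhs in HU; simpl in HU.
  destruct (Rlt_dec 0 y) as [_|]; [|lra]. destruct HU as (r & Hr & _ & HB). exists r. auto.
Qed.

Lemma hnbhs_real_inv x U : hnbhs (Some (x, 0)) U ->
  U (Some (x, 0)) /\ exists r, 0 < r /\
    forall w, 0 < Im w -> Cmod (w - (x, r))%C < r -> U (Some w).
Proof.
  intros HU. unfold hnbhs in HU; simpl in HU.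
  destruct (Rlt_dec 0 0); [lra|]. destruct HU as (r & Hr & HU0 & HB). eauto.
Qed.

Lemma hnbhs_ball x y r : 0 < r -> r <= y ->
  hnbhs (Some (x, y)) (fun q => exists w, q = Some w /\ Cmod (w - (x, y))%C < r).
Proof.
  intros Hr Hry. unfold hnbhs; simpl. destruct (Rlt_dec 0 y); [|lra].
  exists r. split; [assumption|]. split; [assumption|]. eauto.
Qed.

Lemma hnbhs_horodisc x r : 0 < r ->
  hnbhs (Some (x, 0)) (fun q => q = Some (x, 0) \/
    exists w, q = Some w /\ 0 < Im w /\ Cmod (w - (x, r))%C < r).
Proof.
  intros Hr. unfold hnbhs; simpl. destruct (Rlt_dec 0 0); [lra|].
  exists r. split; [assumption|]. split; [left; reflexivity|]. eauto 6.
Qed.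

Lemma hnbhs_above c : 0 < c ->
  hnbhs None (fun q => q = None \/ exists w, q = Some w /\ c < Im w).
Proof. intros Hc. exists c. split; [assumption|]. split; [left; reflexivity|]. eauto. Qed.

Definition semicircle (lo hi : R) (S : pt -> Prop) : Prop :=
  forall p, S p <-> exists x y, p = Some (x, y) /\ 0 <= y /\ y * y = (x - lo) * (hi - x).

Definition arc (lo hi t : R) : pt := Some (lo + t * (hi - lo), (hi - lo) * sqrt (t * (1 - t))).

Definition arc_coord (lo hi : R) (p : pt) : R :=
  match p with Some z => (fst z - lo) / (hi - lo) | None => 0 end.

Lemma arc_gap_bound t s : 0 <= t <= 1 -> 0 <= s <= 1 ->
  Rabs (sqrt (s * (1 - s)) - sqrt (t * (1 - t))) <= sqrt (Rabs (s - t)).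
Proof.
  intros Ht Hs. eapply Rle_trans; [apply sqrt_Rabs_sub_le; nra|].
  apply sqrt_le_1_alt.
  replace (s * (1 - s) - t * (1 - t)) with ((s - t) * (1 - s - t)) by ring.
  rewrite Rabs_mult. pose proof (Rabs_pos (s - t)).
  assert (Rabs (1 - s - t) <= 1) by (apply Rabs_le; lra). nra.
Qed.

(* Near a cusp, [arc] runs inside every horodisc: with [e] the parameter distance
   to the endpoint, [(e D)^2 + y^2 = D^2 e] is small compared with [y ~ D sqrt e]. *)
Lemma arc_in_horodisc D r e : 0 < D -> 0 < r -> 0 < e < 1 / 2 -> D * D * e < 2 * r * r ->
  (e * D) ^ 2 + (D * sqrt (e * (1 - e))) ^ 2 < 2 * r * (D * sqrt (e * (1 - e))).
Proof.
  intros HD Hr He Hsmall.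
  assert (Hy : (D * sqrt (e * (1 - e))) ^ 2 = D * D * (e * (1 - e))).
  { rewrite <- Rsqr_pow2, Rsqr_mult, Rsqr_sqrt by nra. unfold Rsqr. ring. }
  rewrite Hy.
  assert (Hlt : D * e < 2 * r * sqrt (e * (1 - e))).
  { replace (2 * r * sqrt (e * (1 - e))) with (sqrt (4 * r * r * (e * (1 - e)))).
    - apply lt_sqrt_of_sq_lt. nra.
    - rewrite sqrt_mult by nra.
      replace (4 * r * r) with ((2 * r) * (2 * r)) by ring. rewrite sqrt_square by lra. ring. }
  nra.
Qed.

Section Semicircle.
Variables (lo hi : R) (S : pt -> Prop).
Hypotheses (Hlh : lo < hi) (HS : semicircle lo hi S).

Lemma semicircle_between x y : S (Some (x, y)) -> 0 <= y /\ lo <= x <= hi.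
Proof.
  intros H. apply HS in H as (x' & y' & E & Hy & Hc). injection E as <- <-.
  split; [assumption|]. split.
  - destruct (Rle_dec lo x); [assumption|]. nra.
  - destruct (Rle_dec x hi); [assumption|]. nra.
Qed.

Lemma arc_mem t : 0 <= t <= 1 -> S (arc lo hi t).
Proof.
  intros Ht. apply HS. do 2 eexists. split; [reflexivity|]. split.
  - apply Rmult_le_pos; [lra|apply sqrt_pos].
  - replace ((hi - lo) * sqrt (t * (1 - t)) * ((hi - lo) * sqrt (t * (1 - t)))) with
      ((hi - lo) * (hi - lo) * (sqrt (t * (1 - t)) * sqrt (t * (1 - t)))) by ring.
    rewrite sqrt_sqrt by nra. ring.
Qed.

Lemma arc_coord_range p : S p -> 0 <= arc_coord lo hi p <= 1.
Proof.
  intros H. pose proof H as H'. apply HS in H' as (x & y & -> & _).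
  destruct (semicircle_between x y H) as [_ Hx]. simpl.
  split; [apply Rdiv_le_0_compat; lra|].
  apply (Rcomplements.Rdiv_le_1 (x - lo) (hi - lo)); lra.
Qed.

Lemma arc_coord_arc t : arc_coord lo hi (arc lo hi t) = t.
Proof. unfold arc_coord, arc; simpl. field. lra. Qed.

Lemma arc_arc_coord p : S p -> arc lo hi (arc_coord lo hi p) = p.
Proof.
  intros H. pose proof H as H'. apply HS in H' as (x & y & -> & Hy & Hc).
  pose proof (arc_coord_range _ H) as Ht. unfold arc, arc_coord in *; simpl in *.
  do 2 f_equal; [field; lra|].
  rewrite <- (sqrt_square (hi - lo)) at 1 by lra. rewrite <- sqrt_mult by nra.
  replace ((hi - lo) * (hi - lo) * ((x - lo) / (hi - lo) * (1 - (x - lo) / (hi - lo))))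
    with (y * y) by (rewrite Hc; field; lra).
  apply sqrt_square. assumption.
Qed.

Lemma arc_continuous_upper t : 0 < t < 1 -> forall U, hnbhs (arc lo hi t) U ->
  exists d, 0 < d /\ forall s, 0 <= s <= 1 -> Rabs (s - t) < d -> U (arc lo hi s).
Proof.
  intros Ht U HU. set (D := hi - lo) in *. assert (HD : 0 < D) by (unfold D; lra).
  assert (HY : 0 < D * sqrt (t * (1 - t))) by (apply Rmult_lt_0_compat; [|apply sqrt_lt_R0]; nra).
  destruct (hnbhs_upper_inv _ _ U HY HU) as (r & Hr & HB).
  set (k := r / (2 * D)). assert (Hk : 0 < k) by (unfold k; apply Rdiv_lt_0_compat; lra).
  exists (Rmin 1 (k * k)). split; [apply Rmin_glb_lt; nra|].
  intros s Hs Hst. apply HB. unfold D. apply Cmod_lt_of_Rabs. fold D.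
  set (e := Rabs (s - t)) in *.
  assert (He1 : e < 1) by (eapply Rlt_le_trans; [exact Hst|apply Rmin_l]).
  assert (He2 : e < k * k) by (eapply Rlt_le_trans; [exact Hst|apply Rmin_r]).
  assert (He0 : 0 <= e) by apply Rabs_pos.
  assert (Hsq : sqrt e < k) by (apply sqrt_lt_of_sq_lt; assumption).
  assert (Hle : e <= sqrt e).
  { rewrite <- (sqrt_square e) at 1 by lra. apply sqrt_le_1_alt. nra. }
  replace (lo + s * D - (lo + t * D)) with ((s - t) * D) by ring.
  replace (D * sqrt (s * (1 - s)) - D * sqrt (t * (1 - t)))
    with (D * (sqrt (s * (1 - s)) - sqrt (t * (1 - t)))) by ring.
  rewrite !Rabs_mult, (Rabs_pos_eq D) by lra. fold e.
  pose proof (arc_gap_bound t s ltac:(lra) Hs). fold e in H.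
  assert (r = 2 * D * k) by (unfold k; field; lra). nra.
Qed.

Lemma arc_lo : arc lo hi 0 = Some (lo, 0).
Proof.
  unfold arc. replace (0 * (1 - 0)) with 0 by ring. rewrite sqrt_0. f_equal; f_equal; ring.
Qed.

Lemma arc_hi : arc lo hi 1 = Some (hi, 0).
Proof.
  unfold arc. replace (1 * (1 - 1)) with 0 by ring. rewrite sqrt_0. f_equal; f_equal; ring.
Qed.

Lemma arc_continuous_cusp t (c : R) : (t = 0 /\ c = lo \/ t = 1 /\ c = hi) ->
  forall U, hnbhs (arc lo hi t) U ->
  exists d, 0 < d /\ forall s, 0 <= s <= 1 -> Rabs (s - t) < d -> U (arc lo hi s).
Proof.
  intros Htc U HU. set (D := hi - lo). assert (HD : 0 < D) by (unfold D; lra).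
  assert (Ec : arc lo hi t = Some (c, 0))
    by (destruct Htc as [[-> ->]|[-> ->]]; [apply arc_lo|apply arc_hi]).
  rewrite Ec in HU. destruct (hnbhs_real_inv _ _ HU) as (HU0 & r & Hr & HB).
  exists (Rmin (1 / 2) (2 * r * r / (D * D))). split.
  { apply Rmin_glb_lt; [lra|]. apply Rdiv_lt_0_compat; nra. }
  intros s Hs Hst. set (e := Rabs (s - t)) in *.
  assert (He1 : e < 1 / 2) by (eapply Rlt_le_trans; [exact Hst|apply Rmin_l]).
  assert (He2 : D * D * e < 2 * r * r).
  { assert (e < 2 * r * r / (D * D)) by (eapply Rlt_le_trans; [exact Hst|apply Rmin_r]).
    apply (Rmult_lt_reg_r (/ (D * D))); [apply Rinv_0_lt_compat; nra|].
    replace (D * D * e * / (D * D)) with e by (field; lra). exact H. }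
  destruct (Req_dec e 0) as [E0|E0].
  { replace s with t by (unfold e in E0; apply Rabs_eq_0 in E0; lra). rewrite Ec. exact HU0. }
  assert (He : 0 < e < 1 / 2) by (pose proof (Rabs_pos (s - t)); fold e in H; lra).
  assert (Hss : s * (1 - s) = e * (1 - e)).
  { unfold e. destruct Htc as [[-> _]|[-> _]].
    - rewrite Rminus_0_r, Rabs_pos_eq by lra. ring.
    - rewrite Rabs_left1 by lra. ring. }
  assert (Hx : (lo + s * D - c) ^ 2 = (e * D) ^ 2).
  { unfold e. destruct Htc as [[-> ->]|[-> ->]].
    - rewrite Rminus_0_r, Rabs_pos_eq by lra. ring.
    - rewrite Rabs_left1 by lra. unfold D. ring. }
  unfold arc. fold D. rewrite Hss. apply HB; simpl.
  - apply Rmult_lt_0_compat; [assumption|]. apply sqrt_lt_R0. nra.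
  - apply Cmod_lt_horodisc; [assumption|]. rewrite Hx. apply arc_in_horodisc; assumption.
Qed.

Lemma arc_continuous t : 0 <= t <= 1 -> forall U, hnbhs (arc lo hi t) U ->
  exists d, 0 < d /\ forall s, 0 <= s <= 1 -> Rabs (s - t) < d -> U (arc lo hi s).
Proof.
  intros Ht.
  destruct (Req_dec t 0) as [->|H0]; [apply (arc_continuous_cusp 0 lo); auto|].
  destruct (Req_dec t 1) as [->|H1]; [apply (arc_continuous_cusp 1 hi); auto|].
  apply arc_continuous_upper. lra.
Qed.

Lemma arc_coord_continuous p : S p -> forall e, 0 < e ->
  exists U, hnbhs p U /\ forall q, S q -> U q -> Rabs (arc_coord lo hi q - arc_coord lo hi p) < e.
Proof.
  intros H e He. set (D := hi - lo). assert (HD : 0 < D) by (unfold D; lra).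
  pose proof H as H'. apply HS in H' as (x & y & -> & Hy & _).
  assert (Key : forall u v, Rabs (u - x) < e * D ->
            Rabs (arc_coord lo hi (Some (u, v)) - arc_coord lo hi (Some (x, y))) < e).
  { intros u v Hu. simpl. fold D.
    replace ((u - lo) / D - (x - lo) / D) with ((u - x) / D) by (field; lra).
    unfold Rdiv. rewrite Rabs_mult, (Rabs_pos_eq (/ D)) by (apply Rlt_le, Rinv_0_lt_compat; lra).
    apply (Rmult_lt_reg_r D); [assumption|]. rewrite Rmult_assoc, Rinv_l by lra. lra. }
  destruct (Rlt_le_dec 0 y) as [Hp|Hp].
  - exists (fun q => exists w, q = Some w /\ Cmod (w - (x, y))%C < Rmin y (e * D)).
    split; [apply hnbhs_ball; [apply Rmin_glb_lt; nra|apply Rmin_l]|].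
    intros q _ ([u v] & -> & Hw). apply Key.
    eapply Rle_lt_trans; [apply Rabs_le_Cmod_l|]. eapply Rlt_le_trans; [exact Hw|apply Rmin_r].
  - replace y with 0 by lra.
    exists (fun q => q = Some (x, 0) \/
      exists w, q = Some w /\ 0 < Im w /\ Cmod (w - (x, (e * D / 2)%R))%C < e * D / 2).
    split; [apply hnbhs_horodisc; nra|].
    intros q _ [->|([u v] & -> & _ & Hw)].
    + rewrite Rminus_diag, Rabs_R0. assumption.
    + apply Key. pose proof (Rabs_le_Cmod_l u v x (e * D / 2)). nra.
Qed.
End Semicircle.

Lemma semicircle_two_cusps lo hi S : lo < hi -> is_rat lo -> is_rat hi ->
  semicircle lo hi S -> two_cusps S.
Proof.
  intros Hlh Rlo Rhi HS. exists (Some (lo, 0)), (Some (hi, 0)).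
  split; [intro E; injection E; lra|].
  split; [split; [reflexivity|assumption]|]. split; [split; [reflexivity|assumption]|].
  split; [apply HS; exists lo, 0; repeat split; lra|].
  split; [apply HS; exists hi, 0; repeat split; lra|].
  intros r Hr Sr. apply HS in Sr as (x & y & -> & _ & Hc).
  destruct Hr as [Hy _]; simpl in Hy; subst y.
  assert (Hf : (x - lo) * (hi - x) = 0) by lra.
  apply Rmult_integral in Hf as [Hf|Hf]; [left|right]; do 2 f_equal; lra.
Qed.

Lemma semicircle_homeomorphic lo hi S : lo < hi -> semicircle lo hi S ->
  homeomorphic_to_interval S.
Proof.
  intros Hlh HS. exists (arc lo hi), (arc_coord lo hi). unfold in_unit_interval.
  split; [intros t Ht; eapply arc_mem; eassumption|].
  split; [intros p Hp; eapply arc_coord_range; eassumption|].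
  split; [intros t _; eapply arc_coord_arc; eassumption|].
  split; [intros p Hp; eapply arc_arc_coord; eassumption|].
  split; [intros t Ht; eapply arc_continuous; eassumption|].
  intros p Hp. eapply arc_coord_continuous; eassumption.
Qed.

Definition vertical_ray (x0 : R) (S : pt -> Prop) : Prop :=
  forall p, S p <-> p = None \/ exists y, p = Some (x0, y) /\ 0 <= y.

Definition ray (x0 t : R) : pt := if Rlt_dec t 1 then Some (x0, t / (1 - t)) else None.

Definition ray_coord (p : pt) : R := match p with Some z => snd z / (1 + snd z) | None => 1 end.

Section Ray.
Variables (x0 : R) (S : pt -> Prop).
Hypothesis HS : vertical_ray x0 S.

Lemma ray_mem t : 0 <= t <= 1 -> S (ray x0 t).
Proof.
  intros Ht. apply HS. unfold ray. destruct (Rlt_dec t 1); [|left; reflexivity].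
  right. eexists. split; [reflexivity|]. apply Rdiv_le_0_compat; lra.
Qed.

Lemma ray_coord_range p : S p -> 0 <= ray_coord p <= 1.
Proof.
  intros H. apply HS in H as [->|(y & -> & Hy)]; simpl; [lra|].
  split; [apply Rdiv_le_0_compat; lra|]. apply (Rcomplements.Rdiv_le_1 y (1 + y)); lra.
Qed.

Lemma ray_coord_ray t : 0 <= t <= 1 -> ray_coord (ray x0 t) = t.
Proof. intros Ht. unfold ray. destruct (Rlt_dec t 1); simpl; [field|]; lra. Qed.

Lemma ray_ray_coord p : S p -> ray x0 (ray_coord p) = p.
Proof.
  intros H. apply HS in H as [->|(y & -> & Hy)]; unfold ray, ray_coord; simpl.
  - destruct (Rlt_dec 1 1); [lra|reflexivity].
  - destruct (Rlt_dec (y / (1 + y)) 1) as [_|h].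
    + do 2 f_equal. field. lra.
    + exfalso. apply h. apply (Rcomplements.Rdiv_lt_1 y (1 + y)); lra.
Qed.

Lemma Cmod_vertical a b : Cmod ((x0, a) - (x0, b))%C = Rabs (a - b).
Proof.
  rewrite Cmod_pair_sub, Rminus_diag, <- sqrt_Rsqr_abs. f_equal.
  rewrite Rsqr_pow2. ring.
Qed.

Lemma ray_lt1 t : t < 1 -> ray x0 t = Some (x0, t / (1 - t)).
Proof. intros Ht. unfold ray. destruct (Rlt_dec t 1); [reflexivity|contradiction]. Qed.

Lemma ray_continuous_upper t : 0 < t < 1 -> forall U, hnbhs (ray x0 t) U ->
  exists d, 0 < d /\ forall s, 0 <= s <= 1 -> Rabs (s - t) < d -> U (ray x0 s).
Proof.
  intros Ht U HU. rewrite ray_lt1 in HU by lra.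
  destruct (hnbhs_upper_inv x0 (t / (1 - t)) U ltac:(apply Rdiv_lt_0_compat; lra) HU)
    as (r & Hr & HB).
  exists (Rmin ((1 - t) / 2) (r * (1 - t) * (1 - t) / 2)). split.
  { apply Rmin_glb_lt; [lra|]. apply Rdiv_lt_0_compat; [|lra].
    apply Rmult_lt_0_compat; [apply Rmult_lt_0_compat|]; lra. }
  intros s Hs Hst.
  assert (Hst1 : Rabs (s - t) < (1 - t) / 2) by (eapply Rlt_le_trans; [exact Hst|apply Rmin_l]).
  assert (Hst2 : Rabs (s - t) < r * (1 - t) * (1 - t) / 2)
    by (eapply Rlt_le_trans; [exact Hst|apply Rmin_r]).
  assert (Hs1 : (1 - t) / 2 < 1 - s) by (apply Rabs_def2 in Hst1; lra).
  rewrite ray_lt1 by lra. apply HB. rewrite Cmod_vertical.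
  replace (s / (1 - s) - t / (1 - t)) with ((s - t) / ((1 - s) * (1 - t))) by (field; lra).
  unfold Rdiv. rewrite Rabs_mult, (Rabs_pos_eq (/ _)) by (apply Rlt_le, Rinv_0_lt_compat; nra).
  assert (Hpos : 0 < (1 - s) * (1 - t)) by nra.
  apply (Rmult_lt_reg_r ((1 - s) * (1 - t))); [assumption|].
  rewrite Rmult_assoc, Rinv_l, Rmult_1_r by lra.
  assert (r * ((1 - t) / 2 * (1 - t)) <= r * ((1 - s) * (1 - t))).
  { apply Rmult_le_compat_l; [lra|]. apply Rmult_le_compat_r; lra. }
  lra.
Qed.

Lemma ray_continuous_cusp U : hnbhs (ray x0 0) U ->
  exists d, 0 < d /\ forall s, 0 <= s <= 1 -> Rabs (s - 0) < d -> U (ray x0 s).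
Proof.
  intros HU. rewrite ray_lt1 in HU by lra.
  replace (0 / (1 - 0)) with 0 in HU by (field; lra).
  destruct (hnbhs_real_inv _ _ HU) as (HU0 & r & Hr & HB).
  exists (Rmin (1 / 2) r). split; [apply Rmin_glb_lt; lra|].
  intros s Hs Hst. rewrite Rminus_0_r, Rabs_pos_eq in Hst by lra.
  assert (Hs1 : s < 1 / 2) by (eapply Rlt_le_trans; [exact Hst|apply Rmin_l]).
  assert (Hs2 : s < r) by (eapply Rlt_le_trans; [exact Hst|apply Rmin_r]).
  rewrite ray_lt1 by lra.
  destruct (Req_dec s 0) as [->|Hs0].
  { replace (0 / (1 - 0)) with 0 by (field; lra). exact HU0. }
  assert (Hy : 0 < s / (1 - s)) by (apply Rdiv_lt_0_compat; lra).
  assert (Hy2 : s / (1 - s) <= 2 * s).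
  { apply (Rmult_le_reg_r (1 - s)); [lra|]. unfold Rdiv.
    rewrite Rmult_assoc, Rinv_l by lra. nra. }
  apply HB; [exact Hy|]. apply Cmod_lt_horodisc; [assumption|].
  rewrite Rminus_diag. nra.
Qed.

Lemma ray_continuous_infinity U : hnbhs (ray x0 1) U ->
  exists d, 0 < d /\ forall s, 0 <= s <= 1 -> Rabs (s - 1) < d -> U (ray x0 s).
Proof.
  intros HU. unfold ray in HU. destruct (Rlt_dec 1 1) as [|_]; [lra|].
  destruct HU as (c & Hc & HU0 & HB).
  exists (1 / (1 + c)). split; [apply Rdiv_lt_0_compat; lra|].
  intros s Hs Hst. unfold ray. destruct (Rlt_dec s 1) as [h|h]; [|exact HU0].
  apply HB. simpl. rewrite Rabs_left in Hst by lra.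
  apply (Rmult_lt_reg_r (1 - s)); [lra|]. unfold Rdiv.
  rewrite Rmult_assoc, Rinv_l, Rmult_1_r by lra.
  assert ((1 - s) * (1 + c) < 1).
  { apply (Rmult_lt_reg_r (/ (1 + c))); [apply Rinv_0_lt_compat; lra|].
    rewrite Rmult_assoc, Rinv_r by lra. lra. }
  nra.
Qed.

Lemma ray_continuous t : 0 <= t <= 1 -> forall U, hnbhs (ray x0 t) U ->
  exists d, 0 < d /\ forall s, 0 <= s <= 1 -> Rabs (s - t) < d -> U (ray x0 s).
Proof.
  intros Ht U.
  destruct (Req_dec t 0) as [->|H0]; [apply ray_continuous_cusp|].
  destruct (Req_dec t 1) as [->|H1]; [apply ray_continuous_infinity|].
  apply ray_continuous_upper. lra.
Qed.

Lemma ray_coord_continuous p : S p -> forall e, 0 < e ->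
  exists U, hnbhs p U /\ forall q, S q -> U q -> Rabs (ray_coord q - ray_coord p) < e.
Proof.
  intros H e He. apply HS in H as [->|(y & -> & Hy)].
  - exists (fun q => q = None \/ exists w, q = Some w /\ 1 / e < Im w).
    split; [apply hnbhs_above, Rdiv_lt_0_compat; lra|].
    intros q _ [->|([u v] & -> & Hv)]; simpl in *.
    + rewrite Rminus_diag, Rabs_R0. assumption.
    + assert (Hv0 : 0 < v) by (assert (0 < 1 / e) by (apply Rdiv_lt_0_compat; lra); lra).
      replace (v / (1 + v) - 1) with (- (1 / (1 + v))) by (field; lra).
      rewrite Rabs_Ropp, Rabs_pos_eq by (apply Rlt_le, Rdiv_lt_0_compat; lra).
      apply (Rmult_lt_reg_r (1 + v)); [lra|]. unfold Rdiv in *.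
      rewrite Rmult_assoc, Rinv_l by lra.
      assert (1 < e * v).
      { apply (Rmult_lt_reg_r (/ e)); [apply Rinv_0_lt_compat; lra|].
        replace (e * v * / e) with v by (field; lra). lra. }
      nra.
  - assert (Key : forall v, 0 <= v -> Rabs (v - y) < e ->
              Rabs (ray_coord (Some (x0, v)) - ray_coord (Some (x0, y))) < e).
    { intros v Hv Hvy. simpl.
      replace (v / (1 + v) - y / (1 + y)) with ((v - y) / ((1 + v) * (1 + y))) by (field; lra).
      unfold Rdiv. rewrite Rabs_mult, (Rabs_pos_eq (/ _)) by (apply Rlt_le, Rinv_0_lt_compat; nra).
      assert (/ ((1 + v) * (1 + y)) <= 1) by (rewrite <- Rinv_1; apply Rinv_le_contravar; nra).
      pose proof (Rabs_pos (v - y)). nra. }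
    destruct (Rlt_le_dec 0 y) as [Hp|Hp].
    + exists (fun q => exists w, q = Some w /\ Cmod (w - (x0, y))%C < Rmin y e).
      split; [apply hnbhs_ball; [apply Rmin_glb_lt; lra|apply Rmin_l]|].
      intros q Hq (w & -> & Hw). apply HS in Hq as [|(v & Ew & Hv)]; [discriminate|].
      injection Ew as ->. apply Key; [assumption|]. rewrite Cmod_vertical in Hw.
      eapply Rlt_le_trans; [exact Hw|apply Rmin_r].
    + assert (y = 0) by lra. subst y.
      exists (fun q => q = Some (x0, 0) \/
        exists w, q = Some w /\ 0 < Im w /\ Cmod (w - (x0, (e / 2)%R))%C < e / 2).
      split; [apply hnbhs_horodisc; lra|].
      intros q Hq [->|(w & -> & Hw & Hc)].
      * rewrite Rminus_diag, Rabs_R0. assumption.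
      * apply HS in Hq as [|(v & Ew & Hv)]; [discriminate|]. injection Ew as ->.
        rewrite Cmod_vertical in Hc. apply Key; [assumption|].
        apply Rabs_def2 in Hc. rewrite Rminus_0_r, Rabs_pos_eq by lra. lra.
Qed.
End Ray.

Lemma vertical_ray_two_cusps x0 S : is_rat x0 -> vertical_ray x0 S -> two_cusps S.
Proof.
  intros Rx HS. exists (Some (x0, 0)), None.
  split; [discriminate|]. split; [split; [reflexivity|assumption]|]. split; [exact I|].
  split; [apply HS; right; exists 0; split; [reflexivity|lra]|].
  split; [apply HS; left; reflexivity|].
  intros r Hr Sr. apply HS in Sr as [->|(y & -> & _)]; [right; reflexivity|left].
  destruct Hr as [Hy _]; simpl in Hy; subst y. reflexivity.
Qed.

Lemma vertical_ray_homeomorphic x0 S : vertical_ray x0 S -> homeomorphic_to_interval S.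
Proof.
  intros HS. exists (ray x0), ray_coord. unfold in_unit_interval.
  split; [intros t Ht; eapply ray_mem; eassumption|].
  split; [intros p Hp; eapply ray_coord_range; eassumption|].
  split; [intros t Ht; apply ray_coord_ray; assumption|].
  split; [intros p Hp; eapply ray_ray_coord; eassumption|].
  split; [intros t Ht; apply ray_continuous; assumption|].
  intros p Hp. eapply ray_coord_continuous; eassumption.
Qed.

(** * Conic loci *)

Definition conic_locus (S : pt -> Prop) (al be de : R) : Prop :=
  (forall x y, 0 < y -> S (Some (x, y)) <-> quad al be de x y = 0) /\
  (forall x, S (Some (x, 0)) <-> is_rat x /\ quad al be de x 0 = 0) /\
  (forall x y, y < 0 -> ~ S (Some (x, y))) /\
  (S None <-> al = 0).

Lemma pt_pred_ext (S T : pt -> Prop) : (S None <-> T None) ->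
  (forall x y, 0 < y -> S (Some (x, y)) <-> T (Some (x, y))) ->
  (forall x, S (Some (x, 0)) <-> T (Some (x, 0))) ->
  (forall x y, y < 0 -> ~ S (Some (x, y)) /\ ~ T (Some (x, y))) ->
  forall p, S p <-> T p.
Proof.
  intros HN Hpos H0 Hneg [[x y]|]; [|assumption].
  destruct (Rtotal_order y 0) as [Hy|[->|Hy]]; [|apply H0|apply Hpos; assumption].
  destruct (Hneg x y Hy). tauto.
Qed.

Lemma conic_locus_line S be de : be <> 0 -> is_rat be -> is_rat de ->
  conic_locus S 0 be de -> vertical_ray (- de / be) S.
Proof.
  intros Hb Rb Rd (Hpos & H0 & Hneg & HN). unfold quad in *.
  assert (Hx : forall x, 0 * (x * x + 0 * 0) + be * x + de = 0 <-> x = - de / be).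
  { intros x. split; intros E; [field_simplify_eq; lra|subst x; field; assumption]. }
  red. apply pt_pred_ext.
  - split; [left; reflexivity|intros _; apply HN; reflexivity].
  - intros x y Hy. rewrite Hpos by assumption.
    replace (0 * (x * x + y * y)) with (0 * (x * x + 0 * 0)) by ring. rewrite Hx.
    split; [intros ->; right; exists y; split; [reflexivity|lra]|].
    intros [|(y' & E & _)]; [discriminate|]. congruence.
  - intros x. rewrite H0, Hx.
    split; [intros [_ ->]; right; exists 0; split; [reflexivity|lra]|].
    intros [|(y' & E & _)]; [discriminate|]. injection E as -> _. split; [|reflexivity].
    apply is_rat_div; [apply is_rat_opp| |]; assumption.
  - intros x y Hy. split; [apply Hneg; assumption|].
    intros [|(y' & E & Hy')]; [discriminate|]. injection E as _ ->. lra.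
Qed.

Lemma conic_locus_circle S al be de lo hi : al <> 0 -> lo < hi -> is_rat lo -> is_rat hi ->
  (forall x y, quad al be de x y = al * ((x - lo) * (x - hi) + y * y)) ->
  conic_locus S al be de -> semicircle lo hi S.
Proof.
  intros Ha Hlh Rlo Rhi Hq (Hpos & H0 & Hneg & HN).
  assert (Hz : forall x y, quad al be de x y = 0 <-> y * y = (x - lo) * (hi - x)).
  { intros x y. rewrite Hq. split; intros E.
    - apply Rmult_integral in E as [E|E]; [contradiction|lra].
    - replace ((x - lo) * (x - hi) + y * y) with 0 by lra. ring. }
  red. apply pt_pred_ext.
  - split; [intros H; apply HN in H; contradiction|]. intros (x & y & E & _). discriminate.
  - intros x y Hy. rewrite Hpos, Hz by assumption.
    split; [intros E; exists x, y; repeat split; lra|].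
    intros (x' & y' & E & _ & Hc). injection E as <- <-. assumption.
  - intros x. rewrite H0, Hz.
    split; [intros [_ E]; exists x, 0; repeat split; lra|].
    intros (x' & y' & E & _ & Hc). injection E as <- <-. split; [|assumption].
    assert (Hf : (x - lo) * (hi - x) = 0) by lra.
    apply Rmult_integral in Hf as [Hf|Hf];
      [replace x with lo by lra|replace x with hi by lra]; assumption.
  - intros x y Hy. split; [apply Hneg; assumption|].
    intros (x' & y' & E & Hy' & _). injection E as _ <-. lra.
Qed.

(* The discriminant [4] makes the two real roots [(-be +- 2) / (2 al)] rational. *)
Lemma conic_locus_two_cusps_interval S al be de :
  is_rat al -> is_rat be -> is_rat de -> be * be - 4 * al * de = 4 ->
  conic_locus S al be de -> two_cusps S /\ homeomorphic_to_interval S.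
Proof.
  intros Ra Rb Rd Hdisc HS.
  destruct (Req_dec al 0) as [->|Ha].
  - assert (Hb : be <> 0) by (intros ->; lra).
    pose proof (conic_locus_line S be de Hb Rb Rd HS) as Hray.
    split; [apply (vertical_ray_two_cusps (- de / be))
           |apply (vertical_ray_homeomorphic (- de / be))];
      try assumption.
    apply is_rat_div; [apply is_rat_opp| |]; assumption.
  - set (u := (- be - 2) / (2 * al)). set (v := (- be + 2) / (2 * al)).
    assert (Ru : is_rat u) by (apply is_rat_div; [apply is_rat_minus, (is_rat_IZR 2)
      |apply is_rat_mult; [apply (is_rat_IZR 2)|]|]; try apply is_rat_opp; try assumption; lra).
    assert (Rv : is_rat v) by (apply is_rat_div; [apply is_rat_plus, (is_rat_IZR 2)
      |apply is_rat_mult; [apply (is_rat_IZR 2)|]|]; try apply is_rat_opp; try assumption; lra).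
    assert (Huv : forall x y, quad al be de x y = al * ((x - u) * (x - v) + y * y)).
    { intros x y. unfold quad, u, v.
      replace de with ((be * be - 4) / (4 * al)) by (field_simplify_eq; lra).
      field. assumption. }
    assert (Hne : u <> v).
    { unfold u, v. intro E. apply Ha. apply Rdiv_eq_iff in E; lra. }
    destruct (Rlt_or_le u v) as [Hlt|Hle].
    + pose proof (conic_locus_circle S al be de u v Ha Hlt Ru Rv Huv HS) as Hc.
      split; [apply (semicircle_two_cusps u v)|apply (semicircle_homeomorphic u v)]; assumption.
    + assert (Hvu : forall x y, quad al be de x y = al * ((x - v) * (x - u) + y * y))
        by (intros; rewrite Huv; ring).
      pose proof (conic_locus_circle S al be de v u Ha ltac:(lra) Rv Ru Hvu HS) as Hc.
      split; [apply (semicircle_two_cusps v u)|apply (semicircle_homeomorphic v u)];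
        try assumption; lra.
Qed.

Lemma in_hstar_upper x y : 0 < y -> in_hstar (Some (x, y)).
Proof. intros Hy. right. exists (x, y). split; [reflexivity|assumption]. Qed.

Lemma in_hstar_real x : in_hstar (Some (x, 0)) <-> is_rat x.
Proof.
  split.
  - intros [[_ H]|(z & E & H)]; [assumption|]. injection E as <-. unfold in_h in H; simpl in H; lra.
  - intros H. left. split; [reflexivity|assumption].
Qed.

Lemma not_in_hstar_lower x y : y < 0 -> ~ in_hstar (Some (x, y)).
Proof.
  intros Hy [[H _]|(z & E & H)]; simpl in *; [lra|].
  injection E as <-. unfold in_h in H; simpl in H; lra.
Qed.

Lemma C_gamma_conic_locus s K m : 0 < s -> rdet K <> 0 -> zdet m = 1%Z ->
  cross_t (rmat_of_z m) K = 0 ->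
  conic_locus (C_gamma (rscale s K) m)
    (cross_a (rmat_of_z m) K) (cross_b (rmat_of_z m) K) (cross_d (rmat_of_z m) K).
Proof.
  intros Hs HK Hm Ht.
  assert (HM : rdet (rmat_of_z m) <> 0) by (rewrite rdet_rmat_of_z, Hm; simpl; lra).
  assert (Hc : forall p, C_gamma (rscale s K) m p <->
                          in_hstar p /\ mob (rmat_of_z m) p = cmob K p).
  { intros p. unfold C_gamma. rewrite cmob_rscale by lra. reflexivity. }
  unfold conic_locus. setoid_rewrite Hc.
  split; [|split; [|split]].
  - intros x y Hy. rewrite mob_eq_cmob_nonreal by (assumption || lra).
    split; [tauto|]. intros E. split; [apply in_hstar_upper|]; tauto.
  - intros x. rewrite mob_eq_cmob_real, in_hstar_real by assumption. reflexivity.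
  - intros x y Hy [H _]. exact (not_in_hstar_lower x y Hy H).
  - rewrite mob_eq_cmob_None by assumption. split; [tauto|]. split; [left; exact I|assumption].
Qed.

Lemma cross_t_rtrfree M A B C : cross_t M (rtrfree A B C) = - rtr (rmul (rtrfree A B C) M).
Proof. unfold cross_t, rtr, rmul, rtrfree; simpl. ring. Qed.

Lemma is_rat_cross_coeffs m A B C : is_rat A -> is_rat B -> is_rat C ->
  is_rat (cross_a (rmat_of_z m) (rtrfree A B C)) /\
  is_rat (cross_b (rmat_of_z m) (rtrfree A B C)) /\
  is_rat (cross_d (rmat_of_z m) (rtrfree A B C)).
Proof.
  intros RA RB RC. unfold cross_a, cross_b, cross_d, rmat_of_z, rtrfree; simpl.
  repeat split;
    repeat first [ apply is_rat_minus | apply is_rat_plus | apply is_rat_mult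
                 | apply is_rat_opp | apply is_rat_IZR | assumption ].
Qed.

Theorem proposition5p3 (G : zmat -> Prop) (J : rmat) (m : zmat) :
  real_congruence_group G J -> G m -> admissible J m ->
  (exists p q : pt, p <> q /\ is_cusp p /\ is_cusp q /\
     C_gamma J m p /\ C_gamma J m q /\
     forall r, is_cusp r -> C_gamma J m r -> r = p \/ r = q) /\
  homeomorphic_to_interval (C_gamma J m).
Proof.
  intros ((Hdet & _) & HJ & _ & N & HN & _ & HstN) Gm Hadm.
  pose proof (Hdet m Gm) as Hm.
  destruct (complex_conjugation_normal_form J HJ) as (s & A & B & C & Hs & Hq & ->).
  assert (HK : rdet (rtrfree A B C) = -1) by (rewrite rdet_rtrfree, Hq; ring).
  destruct (rtrfree_rat_of_GammaN_stable N s A B C HN Hs Hq HstN) as (RA & RB & RC).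
  destruct (is_rat_cross_coeffs m A B C RA RB RC) as (Ra & Rb & Rd).
  assert (Ht : cross_t (rmat_of_z m) (rtrfree A B C) = 0).
  { rewrite cross_t_rtrfree, (rtr_rmul_eq0_of_admissible s _ m Hs HK Hm Hadm). ring. }
  apply (conic_locus_two_cusps_interval _ _ _ _ Ra Rb Rd).
  - rewrite cross_discriminant, Ht, HK, rdet_rmat_of_z, Hm. simpl. ring.
  - apply C_gamma_conic_locus; [assumption|lra|assumption|assumption].
Qed.
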